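(* Let $n,k$ be integers with $1<k<n-1$ and let $\mathcal{P}_{k,n}=\{x\in[0,1]^n:\sum_{i=1}^n x_i=k\}$ with vertex set $V$. There is no family of Bernstein polynomials $\{P_v\}_{v\in V}$ such that the Bernoulli race over $\{P_v\}_{v\in V}$ is a strong Bernoulli factory for $\mathcal{P}_{k,n}$.
   Context: A Bernstein monomial is $\prod_{i=1}^n x_i^{a_i}(1-x_i)^{b_i}$ with nonnegative integers $a_i,b_i$; a Bernstein polynomial is a finite combination $\sum_j c_jM_j(x)$ of Bernstein monomials with positive coefficients $c_j$. A Bernoulli factory with output set $V$ (for inputs $x\in[0,1]^n$) is a (possibly infinite) rooted binary tree whose internal nodes are labeled by an index $i\in[n]$ or a known constant $c\in(0,1)$ and whose leaves are labeled by elements of $V$; on input $x$ one walks from the root, at a node labeled $i$ flipping a fresh independent coin that is $1$ with probability $x_i$ (an $x_i$-coin), at a node labeled $c$ a fresh coin of bias $c$, following the edge labeled by the outcome, and outputs the label of the leaf reached. A strong Bernoulli factory for a polytope $\mathcal{P}$ with vertex set $V$ is such a factory with output set $V$ that terminates almost surely and satisfies $\mathbb{E}[\mathcal{F}(x)]=x$ for all $x\in\mathcal{P}$. The Bernoulli race over Bernstein polynomials $\{P_v\}_{v\in V}$ is the following factory: fix a constant $C\ge1$ at least the sum of the coefficients of every $P_v$. In each round, pick $v\in V$ uniformly at random; writing $P_v=\sum_j c_jM_j$, select monomial $M_j$ with probability $c_j/C$ (with the remaining probability select none, which counts as failure); if $M_j=\prod_i x_i^{a_i}(1-x_i)^{b_i}$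 is selected, flip the $x_i$-coin $a_i+b_i$ times for each $i$, and declare success iff for every $i$ the first $a_i$ flips are $1$ and the next $b_i$ flips are $0$. On success output $v$; otherwise start a new round. *)

From HB Require Import structures.
From mathcomp Require Import all_boot all_order all_algebra.
From mathcomp Require Import all_classical all_reals all_analysis.
Set Implicit Arguments. Unset Strict Implicit. Unset Printing Implicit Defensive.
Import Order.TTheory GRing.Theory Num.Theory.
Local Open Scope ring_scope.

Section BernoulliRace.
Variables (R : realType) (n : nat).

Definition bmono := (('I_n -> nat) * ('I_n -> nat))%type.

Definition bmono_eval (m : bmono) (x : 'I_n -> R) : R :=
  \prod_(i < n) (x i ^+ m.1 i * (1 - x i) ^+ m.2 i).

Definition bpoly := seq (R * bmono).

Definition is_bernstein (p : bpoly) : Prop := forall t, t \in p -> 0 < t.1.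

Definition coef_sum (p : bpoly) : R := \sum_(t <- p) t.1.

Definition in_Pkn (k : nat) (x : 'I_n -> R) : Prop :=
  (forall i, 0 <= x i <= 1) /\ \sum_(i < n) x i = k%:R.

(* Vertex set of P_{k,n} (1 < k < n-1): the 0/1-vectors with exactly k ones,
   encoded by their supports S ⊆ [n] with |S| = k. *)
Definition vertices (k : nat) : {set {set 'I_n}} := [set S : {set 'I_n} | #|S| == k].
Definition vertex_vec (S : {set 'I_n}) : 'I_n -> R := fun i => (i \in S)%:R.

(* One round of the Bernoulli race over {P_v}_{v in V} with constant C, on
   input x: v is picked uniformly (prob 1/|V|), monomial M_j of P_v is picked
   with probability c_j/C, and the independent coin flips all come out as
   required with probability M_j(x).  race_round_succ returns the probability
   that a single round succeeds *and* outputs v. *)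
Definition race_round_succ (V : {set {set 'I_n}}) (P : {set 'I_n} -> bpoly)
  (C : R) (x : 'I_n -> R) (v : {set 'I_n}) : R :=
  (#|V|%:R)^-1 * \sum_(t <- P v) (t.1 / C * bmono_eval t.2 x).

Definition race_round_fail (V : {set {set 'I_n}}) (P : {set 'I_n} -> bpoly) (C : R) (x : 'I_n -> R) : R :=
  1 - \sum_(w in V) race_round_succ V P C x w.

(* Probability that the race outputs v: it does so at round r+1 iff the
   first r rounds fail and round r+1 succeeds with output v (rounds are
   independent). *)
Definition race_output_prob (V : {set {set 'I_n}}) (P : {set 'I_n} -> bpoly) (C : R) (x : 'I_n -> R) (v : {set 'I_n}) : \bar R :=
  (\sum_(0 <= r <oo) ((race_round_fail V P C x ^+ r
                        * race_round_succ V P C x v)%:E))%E.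

(* The race is a strong Bernoulli factory for P_{k,n}: for every x in the
   polytope it terminates almost surely (output probabilities sum to 1) and
   the expected output vertex equals x. *)
Definition race_strong_factory (k : nat) (P : {set 'I_n} -> bpoly) (C : R)
  : Prop :=
  forall x, in_Pkn k x ->
    (\sum_(v in vertices k) race_output_prob (vertices k) P C x v = 1)%E /\
    (forall i : 'I_n,
       (\sum_(v in vertices k)
          race_output_prob (vertices k) P C x v * (vertex_vec v i)%:E
        = (x i)%:E)%E).

Definition valid_race (k : nat) (P : {set 'I_n} -> bpoly) (C : R) : Prop :=
  (forall v, v \in vertices k -> is_bernstein (P v)) /\ 1 <= C /\
  (forall v, v \in vertices k -> coef_sum (P v) <= C).

End BernoulliRace.

(* If the race is a strong factory, the success probabilities s_v(x) of one
   round satisfy the barycentre identity sum_v s_v(x) v = x * sum_v s_v(x).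
   Testing it at points of P_{k,n} with one coordinate pinned to 0 (resp. 1)
   and all others strictly inside (0, 1), which exist since 1 < k < n - 1,
   shows that every monomial of P_v contains x_l for l in v and 1 - x_l for
   l not in v.  Hence at a vertex u only P_u can succeed, so some monomial of
   P_u is positive at u and the total success probability stays bounded below
   near u.  On the edge from u to u - i + j, however, coordinate j of the
   identity only involves vertices containing j, whose monomials are at most
   s^2 at the point with x_j = s; so the total success probability is at most
   s, which is absurd for small s. *)

From HB Require Import structures.
From mathcomp Require Import all_boot all_order all_algebra.
From mathcomp Require Import all_classical all_reals all_analysis.
From mathcomp Require Import ring lra.
Import Order.TTheory GRing.Theory Num.Theory.
Local Open Scope ring_scope.
Set Implicit Arguments.
Unset Strict Implicit.
Unset Printing Implicit Defensive.

Lemma eseries_geometric (R : realType) (a z : R) : `|z| < 1 ->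
  (\sum_(0 <= r <oo) (z ^+ r * a)%:E)%E = (a / (1 - z))%:E.
Proof.
move=> z1.
have -> : (fun m => \sum_(0 <= r < m) (z ^+ r * a)%:E)%E
          = EFin \o series (geometric a z).
  apply/funext => m /=; rewrite sumEFin /series /=; congr (_%:E).
  by apply: eq_bigr => r _; rewrite mulrC.
rewrite EFin_lim; last exact: is_cvg_geometric_series.
by congr (_%:E); apply: (@cvg_lim R^o) => //; exact: cvg_geometric_series.
Qed.

Lemma ler_sum_inv_card (R : realFieldType) (T : finType) (A : {set T})
    (F : T -> R) c :
  0 <= c -> (forall v, v \in A -> F v <= #|A|%:R^-1 * c) ->
  \sum_(v in A) F v <= c.
Proof.
move=> c0 hF; apply: le_trans (ler_sum _ hF) _.
rewrite sumr_const; have [->|A0] := eqVneq #|A| 0%N; first by rewrite mulr0n.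
by rewrite -mulrnAl -(mulr_natr (_^-1)) mulVf ?mul1r // pnatr_eq0.
Qed.

Lemma bernstein_term01 (R : realFieldType) (y : R) a b : 0 <= y <= 1 ->
  0 <= y ^+ a * (1 - y) ^+ b <= 1.
Proof.
case/andP=> y0 y1; have y0' : 0 <= 1 - y by lra.
have y1' : 1 - y <= 1 by lra.
by rewrite mulr_ge0 ?mulr_ile1 ?exprn_ge0 ?exprn_ile1.
Qed.

Section BernsteinMonomials.
Variables (R : realType) (n : nat).
Implicit Types (m : bmono n) (x y : 'I_n -> R) (l : 'I_n).

Definition in_cube x := forall l, 0 <= x l <= 1.

Definition bmono_factor m x l := x l ^+ m.1 l * (1 - x l) ^+ m.2 l.

Lemma bmono_evalE m x : bmono_eval m x = \prod_l bmono_factor m x l.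
Proof. by []. Qed.

Lemma bmono_factor_ge0 m x l : 0 <= x l <= 1 -> 0 <= bmono_factor m x l.
Proof. by case/(bernstein_term01 (m.1 l) (m.2 l))/andP. Qed.

Lemma bmono_factor_le1 m x l : 0 <= x l <= 1 -> bmono_factor m x l <= 1.
Proof. by case/(bernstein_term01 (m.1 l) (m.2 l))/andP. Qed.

Lemma bmono_factor_gt0 m x l : 0 < x l < 1 -> 0 < bmono_factor m x l.
Proof. by case/andP=> x0 x1; rewrite mulr_gt0 ?exprn_gt0 ?subr_gt0. Qed.

Lemma bmono_factor_le_x m x l :
  0 <= x l <= 1 -> (0 < m.1 l)%N -> bmono_factor m x l <= x l.
Proof.
move=> x01 a_gt0; rewrite /bmono_factor -(prednK a_gt0) exprS -mulrA.
have /andP[_ le1] := bernstein_term01 (m.1 l).-1 (m.2 l) x01.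
by case/andP: x01 => x0 _; rewrite ler_piMr.
Qed.

Lemma bmono_factor_le_subx m x l :
  0 <= x l <= 1 -> (0 < m.2 l)%N -> bmono_factor m x l <= 1 - x l.
Proof.
move=> x01 b_gt0; rewrite /bmono_factor -(prednK b_gt0) exprS mulrCA.
have /andP[_ le1] := bernstein_term01 (m.1 l) (m.2 l).-1 x01.
by case/andP: x01 => _ x1; rewrite ler_piMr ?subr_ge0.
Qed.

Lemma bmono_eval_ge0 m x : in_cube x -> 0 <= bmono_eval m x.
Proof. by move=> cx; apply: prodr_ge0 => l _; exact: bmono_factor_ge0. Qed.

Lemma bmono_eval_le1 m x : in_cube x -> bmono_eval m x <= 1.
Proof.
move=> cx; apply: prodr_ile1 => l _.
by rewrite bmono_factor_ge0 ?bmono_factor_le1.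
Qed.

Lemma bmono_eval_le_factor m x l :
  in_cube x -> bmono_eval m x <= bmono_factor m x l.
Proof.
move=> cx; rewrite bmono_evalE (bigD1 l) //= -[leRHS]mulr1.
rewrite ler_wpM2l ?bmono_factor_ge0 //; apply: prodr_ile1 => l' _.
by rewrite bmono_factor_ge0 ?bmono_factor_le1.
Qed.

Lemma bmono_eval_le_factor2 m x l l' : l != l' -> in_cube x ->
  bmono_eval m x <= bmono_factor m x l * bmono_factor m x l'.
Proof.
move=> ll' cx; rewrite bmono_evalE (bigD1 l) //= (bigD1 l') 1?eq_sym //=.
rewrite mulrA -[leRHS]mulr1 ler_wpM2l //.
  by rewrite mulr_ge0 ?bmono_factor_ge0.
by apply: prodr_ile1 => l'' _; rewrite bmono_factor_ge0 ?bmono_factor_le1.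
Qed.

Lemma bmono_eval_le_x m x l :
  in_cube x -> (0 < m.1 l)%N -> bmono_eval m x <= x l.
Proof.
by move=> cx a_gt0; apply: le_trans (bmono_eval_le_factor m l cx) _;
  exact: bmono_factor_le_x.
Qed.

Lemma bmono_eval_le_subx m x l :
  in_cube x -> (0 < m.2 l)%N -> bmono_eval m x <= 1 - x l.
Proof.
by move=> cx b_gt0; apply: le_trans (bmono_eval_le_factor m l cx) _;
  exact: bmono_factor_le_subx.
Qed.

Lemma bmono_eval_le_mul m x l l' : l != l' -> in_cube x ->
  (0 < m.1 l)%N -> (0 < m.2 l')%N -> bmono_eval m x <= x l * (1 - x l').
Proof.
move=> ll' cx a_gt0 b_gt0; apply: le_trans (bmono_eval_le_factor2 m ll' cx) _.
by rewrite ler_pM ?bmono_factor_ge0 ?bmono_factor_le_x ?bmono_factor_le_subx.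
Qed.

Lemma vertex_vecE (v : {set 'I_n}) l :
  vertex_vec R v l = if l \in v then 1 else 0.
Proof. by rewrite /vertex_vec; case: (l \in v). Qed.

Lemma bmono_factor_neq0 m x l : 0 < bmono_eval m x -> bmono_factor m x l != 0.
Proof.
apply: contraTneq => f0.
by rewrite bmono_evalE (bigD1 l) //= f0 mul0r ltxx.
Qed.

(* Positivity at the vertex forces every exponent to point towards it. *)
Lemma bmono_eval_ge_near_vertex m (v : {set 'I_n}) y :
  0 < bmono_eval m (vertex_vec R v) -> in_cube y ->
  (forall l, `|y l - vertex_vec R v l| <= 2^-1) ->
  2^-1 ^+ (\sum_l (m.1 l + m.2 l)) <= bmono_eval m y.
Proof.
move=> pos cy near; rewrite -prodrXr bmono_evalE; apply: ler_prod => l _.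
rewrite exprn_ge0 ?invr_ge0 //=.
have := bmono_factor_neq0 l pos; have := near l; have /andP[y0 y1] := cy l.
have h2 : (0 : R) <= 2^-1 by rewrite invr_ge0.
have hh : (2 : R)^-1 + 2^-1 = 1 by rewrite [RHS](splitr 1) div1r.
rewrite /bmono_factor vertex_vecE; case: (l \in v) => d.
  rewrite subrr expr1n mul1r expr0n.
  case: (m.2 l =P 0%N) => [-> _|_]; last by rewrite eqxx.
  rewrite addn0 expr0 mulr1; apply: lerXn2r; rewrite ?nnegrE //.
  by move: d; rewrite ler_distl; lra.
rewrite subr0 expr1n mulr1 expr0n.
case: (m.1 l =P 0%N) => [-> _|_]; last by rewrite eqxx.
rewrite add0n expr0 mul1r; apply: lerXn2r; rewrite ?nnegrE ?subr_ge0 //.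
by move: d; rewrite subr0 ler_norml; lra.
Qed.

End BernsteinMonomials.

Section PolytopePkn.
Variables (R : realType) (n : nat).
Implicit Types (x y : 'I_n -> R) (l : 'I_n).

Lemma in_Pkn_vertex k v : v \in vertices n k -> in_Pkn k (vertex_vec R v).
Proof.
rewrite inE => /eqP cv; split=> [l|].
  by rewrite vertex_vecE; case: ifP; rewrite ?lexx ?ler01.
under eq_bigr do rewrite vertex_vecE.
by rewrite -big_mkcond /= sumr_const cv.
Qed.

Definition segment x y (t : R) l := (1 - t) * x l + t * y l.

Lemma in_Pkn_segment k x y t : 0 <= t <= 1 ->
  in_Pkn k x -> in_Pkn k y -> in_Pkn k (segment x y t).
Proof.
case/andP=> t0 t1 [cx sx] [cy sy]; split=> [l|].
  have /andP[x0 x1] := cx l; have /andP[y0 y1] := cy l.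
  by rewrite /segment; apply/andP; split; nra.
by rewrite /segment big_split /= -!mulr_sumr sx sy; ring.
Qed.

Lemma segment_dist x y t l : 0 <= t -> in_cube x -> in_cube y ->
  `|segment x y t l - x l| <= t.
Proof.
move=> t0 cx cy; have /andP[x0 x1] := cx l; have /andP[y0 y1] := cy l.
have -> : segment x y t l - x l = t * (y l - x l) by rewrite /segment; ring.
by rewrite normrM ger0_norm // ler_piMr // ler_norml; apply/andP; split; lra.
Qed.

Lemma in_Pkn_pinned k l (a c : R) : 0 <= a <= 1 -> 0 <= c <= 1 ->
  a + c *+ n.-1 = k%:R -> in_Pkn k (fun l' => if l' == l then a else c).
Proof.
move=> a01 c01 sum_ac; split=> [l'|]; first by case: ifP.
rewrite (bigD1 l) //= eqxx (eq_bigr (fun _ => c)); last by move=> l' /negbTE ->.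
by rewrite sumr_const cardC1 card_ord.
Qed.

Lemma vertices_not_subset k u v : u \in vertices n k -> v \in vertices n k ->
  u != v -> exists2 l, l \in u & l \notin v.
Proof.
rewrite !inE => /eqP cu /eqP cv uv; apply/subsetPn; apply: contra uv => sub.
by apply/eqP/setP; apply/(subset_cardP _ sub); rewrite cu cv.
Qed.

Lemma vertices_swap k u i j : u \in vertices n k -> i \in u -> j \notin u ->
  j |: (u :\ i) \in vertices n k.
Proof.
rewrite !inE => /eqP cu iu ju.
by rewrite cardsU1 in_setD1 (negbTE ju) andbF -cu (cardsD1 i u) iu.
Qed.

Lemma exists_vertex_edge k : (0 < k < n)%N ->
  exists u, exists i, exists j, [/\ u \in vertices n k, i \in u & j \notin u].
Proof.
case/andP=> k0 kn; have lek := ltnW kn.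
pose u := [set widen_ord lek l | l : 'I_k].
have uE l : (l \in u) = (l < k)%N.
  apply/idP/idP => [/imsetP[l' _ ->]|lk]; first exact: (ltn_ord l').
  by apply/imsetP; exists (Ordinal lk) => //; exact: val_inj.
have ik : (k.-1 < n)%N by apply: leq_ltn_trans kn; exact: leq_pred.
exists u, (Ordinal ik), (Ordinal kn); split; rewrite ?uE /= ?ltnn ?prednK //.
have inj_widen : injective (widen_ord lek).
  by move=> l l' /(congr1 val) eq_val; apply: val_inj.
by rewrite inE card_imset // card_ord.
Qed.

End PolytopePkn.

Section BernoulliRace.
Variables (R : realType) (n k : nat) (P : {set 'I_n} -> bpoly R n) (C : R).
Hypothesis race : valid_race k P C.
Implicit Types (x : 'I_n -> R) (u v : {set 'I_n}) (t : R * bmono n).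

Local Notation V := (vertices n k).
Local Notation succ := (race_round_succ V P C).
Local Notation total_succ x := (\sum_(v in V) succ x v).

Lemma race_const_gt0 : 0 < C.
Proof. by case: race => _ [C1 _]; exact: lt_le_trans C1. Qed.

Lemma race_weight_gt0 v t : v \in V -> t \in P v -> 0 < t.1 / C.
Proof.
by move=> vV tP; rewrite divr_gt0 ?race_const_gt0 //; exact: race.1 v vV t tP.
Qed.

Lemma race_round_succ_ge0 x v : in_cube x -> v \in V -> 0 <= succ x v.
Proof.
move=> cx vV; rewrite mulr_ge0 ?invr_ge0 // big_seq sumr_ge0 // => t tP.
by rewrite mulr_ge0 ?bmono_eval_ge0 // (ltW (race_weight_gt0 vV tP)).
Qed.

Lemma race_round_succ_le x v B : v \in V -> 0 <= B ->
  (forall t, t \in P v -> bmono_eval t.2 x <= B) ->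
  succ x v <= #|V|%:R^-1 * B.
Proof.
move=> vV B0 hB; rewrite ler_wpM2l ?invr_ge0 //.
apply: (@le_trans _ _ (\sum_(t <- P v) t.1 / C * B)).
  rewrite big_seq [leRHS]big_seq; apply: ler_sum => t tP.
  by rewrite ler_wpM2l ?hB // (ltW (race_weight_gt0 vV tP)).
rewrite -!mulr_suml -[leRHS]mul1r ler_wpM2r // ler_pdivrMr ?race_const_gt0 //.
by rewrite mul1r; exact: race.2.2 v vV.
Qed.

Lemma race_round_succ_ge x v t : in_cube x -> v \in V -> t \in P v ->
  #|V|%:R^-1 * (t.1 / C * bmono_eval t.2 x) <= succ x v.
Proof.
move=> cx vV tP; rewrite ler_wpM2l ?invr_ge0 //.
rewrite (perm_big _ (perm_to_rem tP)) big_cons lerDl big_seq sumr_ge0 // => t'.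
move=> /mem_rem t'P.
by rewrite mulr_ge0 ?bmono_eval_ge0 // (ltW (race_weight_gt0 vV t'P)).
Qed.

Lemma race_round_succ_gt0 x v t : in_cube x -> v \in V -> t \in P v ->
  0 < bmono_eval t.2 x -> 0 < succ x v.
Proof.
move=> cx vV tP pos; apply: lt_le_trans (race_round_succ_ge cx vV tP).
have V0 : (0 < #|V|)%N by apply/card_gt0P; exists v.
by rewrite mulr_gt0 ?invr_gt0 ?ltr0n // mulr_gt0 // (race_weight_gt0 vV tP).
Qed.

Lemma race_round_succ_eq0 x v : in_cube x -> v \in V ->
  (forall t, t \in P v -> bmono_eval t.2 x <= 0) -> succ x v = 0.
Proof.
move=> cx vV h; apply/le_anti; rewrite race_round_succ_ge0 // andbT.
by apply: le_trans (race_round_succ_le vV (lexx 0) h) _; rewrite mulr0.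
Qed.

Lemma race_round_succ_monomial x v : in_cube x -> v \in V ->
  0 < succ x v -> exists2 t, t \in P v & 0 < bmono_eval t.2 x.
Proof.
move=> cx vV; apply: contraPP => none.
rewrite race_round_succ_eq0 ?ltxx // => t tP.
by rewrite leNgt; apply/negP => pos; apply: none; exists t.
Qed.

Lemma race_total_succ_le1 x : in_cube x -> total_succ x <= 1.
Proof.
move=> cx; apply: ler_sum_inv_card => // v vV.
by apply: race_round_succ_le => // t _; exact: bmono_eval_le1.
Qed.

Lemma race_output_probE x v : in_cube x -> 0 < total_succ x ->
  race_output_prob V P C x v = (succ x v / total_succ x)%:E.
Proof.
move=> cx S0; have S1 := race_total_succ_le1 cx.
rewrite /race_output_prob /race_round_fail eseries_geometric.
  by congr (_ / _)%:E; ring.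
by rewrite ger0_norm; lra.
Qed.

Lemma race_output_prob_eq0 x v : in_cube x -> v \in V -> total_succ x = 0 ->
  race_output_prob V P C x v = 0%E.
Proof.
move=> cx vV S0; rewrite /race_output_prob.
have -> : succ x v = 0.
  by apply: (psumr_eq0P _ S0 vV) => w wV; exact: race_round_succ_ge0.
by apply: eseries0 => r _ _; rewrite mulr0.
Qed.

Hypothesis factory : race_strong_factory k P C.

Lemma race_total_succ_gt0 x : in_Pkn k x -> 0 < total_succ x.
Proof.
move=> hx; have [sum1 _] := factory hx; have cx := hx.1.
rewrite lt0r sumr_ge0 ?andbT => [|v vV]; last exact: race_round_succ_ge0 cx vV.
apply/eqP => S0; move: sum1; rewrite big1 => [/eqP|v vV].
  by rewrite eq_sym onee_eq0.
exact: race_output_prob_eq0 cx vV S0.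
Qed.

Lemma race_barycenter x l : in_Pkn k x ->
  \sum_(v in V) succ x v * vertex_vec R v l = x l * total_succ x.
Proof.
move=> hx; have [_ /(_ l)] := factory hx; have S0 := race_total_succ_gt0 hx.
under eq_bigr do rewrite (race_output_probE _ hx.1 S0) -EFinM.
rewrite [in X in X -> _]sumEFin => -[<-].
rewrite mulr_suml; apply: eq_bigr => v _.
by field; rewrite gt_eqF.
Qed.

Lemma race_round_succ_coord0 x v l : in_Pkn k x -> x l = 0 ->
  v \in V -> l \in v -> succ x v = 0.
Proof.
move=> hx xl vV lv; have := race_barycenter l hx; rewrite xl mul0r => bary.
have ge0 w : w \in V -> 0 <= succ x w * vertex_vec R w l.
  by move=> wV; rewrite mulr_ge0 ?(race_round_succ_ge0 hx.1 wV) // ler0n.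
by have := psumr_eq0P ge0 bary vV; rewrite vertex_vecE lv mulr1.
Qed.

Lemma race_round_succ_coord1 x v l : in_Pkn k x -> x l = 1 ->
  v \in V -> l \notin v -> succ x v = 0.
Proof.
move=> hx xl vV lv; have := race_barycenter l hx; rewrite xl mul1r => bary.
have : \sum_(w in V) succ x w * (1 - vertex_vec R w l) = 0.
  by under eq_bigr do rewrite mulrBr mulr1; rewrite sumrB bary subrr.
have ge0 w : w \in V -> 0 <= succ x w * (1 - vertex_vec R w l).
  move=> wV; rewrite mulr_ge0 ?(race_round_succ_ge0 hx.1 wV) //.
  by rewrite vertex_vecE; case: ifP; rewrite ?subrr ?subr0.
move=> sum0; have := psumr_eq0P ge0 sum0 vV.
by rewrite vertex_vecE (negbTE lv) subr0 mulr1.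
Qed.

Hypotheses (k_gt1 : (1 < k)%N) (k_lt : (k < n.-1)%N).

Lemma race_monomial_exp_in v t l : v \in V -> t \in P v -> l \in v ->
  (0 < t.2.1 l)%N.
Proof.
move=> vV tP lv; rewrite lt0n; apply/eqP => a0.
have n1 : 0 < n.-1%:R :> R by rewrite ltr0n (leq_ltn_trans _ k_lt).
pose c : R := k%:R / n.-1%:R.
have c0 : 0 < c by rewrite divr_gt0 // ltr0n ltnW.
have c1 : c < 1 by rewrite ltr_pdivrMr // mul1r ltr_nat.
pose y l' := if l' == l then 0 else c.
have hy : in_Pkn k y.
  apply: in_Pkn_pinned; rewrite ?lexx ?ler01 ?ltW //.
  by rewrite add0r -(mulr_natr c) divfK ?gt_eqF.
have : 0 < succ y v.
  apply: (race_round_succ_gt0 hy.1 vV tP); apply: prodr_gt0 => l' _.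
  have [->|l'l] := eqVneq l' l.
    by rewrite /bmono_factor /y eqxx a0 subr0 expr1n mulr1 expr0 ltr01.
  by apply: bmono_factor_gt0; rewrite /y (negbTE l'l) c0 c1.
by rewrite (race_round_succ_coord0 hy _ vV lv) ?ltxx // /y eqxx.
Qed.

Lemma race_monomial_exp_out v t l : v \in V -> t \in P v -> l \notin v ->
  (0 < t.2.2 l)%N.
Proof.
move=> vV tP lv; rewrite lt0n; apply/eqP => b0.
have n1 : 0 < n.-1%:R :> R by rewrite ltr0n (leq_ltn_trans _ k_lt).
have k1 : (0 < k.-1)%N by rewrite -ltnS prednK // ltnW.
pose c : R := k.-1%:R / n.-1%:R.
have c0 : 0 < c by rewrite divr_gt0 // ltr0n.
have c1 : c < 1.
  by rewrite ltr_pdivrMr // mul1r ltr_nat (leq_ltn_trans (leq_pred k)).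
pose y l' := if l' == l then 1 else c.
have hy : in_Pkn k y.
  apply: in_Pkn_pinned; rewrite ?lexx ?ler01 ?ltW //.
  by rewrite -(mulr_natr c) divfK ?gt_eqF // addrC natr1 prednK // ltnW.
have : 0 < succ y v.
  apply: (race_round_succ_gt0 hy.1 vV tP); apply: prodr_gt0 => l' _.
  have [->|l'l] := eqVneq l' l.
    by rewrite /bmono_factor /y eqxx b0 expr1n mul1r expr0 ltr01.
  by apply: bmono_factor_gt0; rewrite /y (negbTE l'l) c0 c1.
by rewrite (race_round_succ_coord1 hy _ vV lv) ?ltxx // /y eqxx.
Qed.

Lemma race_vertex_monomial u : u \in V ->
  exists2 t, t \in P u & 0 < bmono_eval t.2 (vertex_vec R u).
Proof.
move=> uV; have hu := in_Pkn_vertex R uV.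
have others v : v \in V -> v != u -> succ (vertex_vec R u) v = 0.
  move=> vV vu; have [l lv lu] := vertices_not_subset vV uV vu.
  apply: race_round_succ_eq0 => // [|t tP]; first exact: hu.1.
  apply: le_trans (bmono_eval_le_x hu.1 (race_monomial_exp_in vV tP lv)) _.
  by rewrite vertex_vecE (negbTE lu).
apply: (race_round_succ_monomial hu.1 uV).
have := race_total_succ_gt0 hu; rewrite (bigD1 u uV) /= big1 ?addr0 //.
by move=> v /andP[vV vu]; exact: others.
Qed.

Section Edge.
Variables (u : {set 'I_n}) (i j : 'I_n).
Hypotheses (uV : u \in V) (iu : i \in u) (ju : j \notin u).

Local Notation edge :=
  (segment (vertex_vec R u) (vertex_vec R (j |: (u :\ i)))).

Lemma edge_in_Pkn s : 0 <= s <= 1 -> in_Pkn k (edge s).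
Proof.
move=> s01; apply: in_Pkn_segment s01 _ _; apply: in_Pkn_vertex => //.
exact: vertices_swap.
Qed.

Lemma edgeE s l : edge s l =
  if l == j then s else if l == i then 1 - s else vertex_vec R u l.
Proof.
rewrite /segment !vertex_vecE in_setU1 in_setD1.
case: (l =P j) => [->|_] /=; first by rewrite (negbTE ju); ring.
by case: (l =P i) => [->|_] /=; [rewrite iu | case: (l \in u)]; ring.
Qed.

Lemma edge_monomial_le v t s : 0 <= s <= 1 -> v \in V -> j \in v ->
  t \in P v -> bmono_eval t.2 (edge s) <= s * s.
Proof.
move=> s01 vV jv tP; have ce := (edge_in_Pkn s01).1.
have ss0 : 0 <= s * s by case/andP: s01 => s0 _; exact: mulr_ge0.
have ij : i != j := memPn ju i iu.
case iv: (i \in v).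
  have [l lu lv] : exists2 l, l \in u & l \notin v.
    by apply: (vertices_not_subset uV vV); apply: contraNneq _ ju => ->.
  have li : l != i by rewrite eq_sym (memPn lv).
  have lj : l != j := memPn ju l lu.
  apply: le_trans (bmono_eval_le_subx ce (race_monomial_exp_out vV tP lv)) _.
  by rewrite edgeE (negbTE lj) (negbTE li) vertex_vecE lu subrr.
have aj := race_monomial_exp_in vV tP jv.
have bi := race_monomial_exp_out vV tP (negbT iv).
apply: le_trans (bmono_eval_le_mul _ ce aj bi) _; first by rewrite eq_sym.
by rewrite !edgeE eqxx (negbTE ij) eqxx; lra.
Qed.

(* Barycentre in coordinate [j]: only vertices containing [j] contribute,
   and each of them succeeds with probability O(s^2). *)
Lemma edge_total_succ_le s : 0 < s <= 1 -> total_succ (edge s) <= s.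
Proof.
case/andP=> s0 s1; have s01 : 0 <= s <= 1 by rewrite ltW.
have := race_barycenter j (edge_in_Pkn s01); rewrite edgeE eqxx => bary.
rewrite -(ler_pM2l s0) -bary; apply: ler_sum_inv_card.
  by rewrite mulr_ge0 // ltW.
move=> v vV; rewrite vertex_vecE; case: ifP => jv.
  rewrite mulr1; apply: race_round_succ_le => // [|t tP].
    by rewrite mulr_ge0 // ltW.
  exact: edge_monomial_le s01 vV jv tP.
by rewrite mulr0 mulr_ge0 ?invr_ge0 // mulr_ge0 // ltW.
Qed.

Lemma edge_total_succ_ge : exists2 d, 0 < d &
  forall s, 0 <= s <= 2^-1 -> d <= total_succ (edge s).
Proof.
have [t tP pos] := race_vertex_monomial uV.
have cu := (in_Pkn_vertex R uV).1.
have cw := (in_Pkn_vertex R (vertices_swap uV iu ju)).1.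
have V0 : (0 < #|V|)%N by apply/card_gt0P; exists u.
exists (#|V|%:R^-1 * (t.1 / C * 2^-1 ^+ (\sum_l (t.2.1 l + t.2.2 l)))).
  have w0 := race_weight_gt0 uV tP.
  by rewrite mulr_gt0 ?invr_gt0 ?ltr0n // mulr_gt0 // exprn_gt0 // invr_gt0.
move=> s /andP[s0 s_half].
have s01 : 0 <= s <= 1 by apply/andP; split; lra.
have ce := (edge_in_Pkn s01).1.
apply: le_trans (_ : _ <= succ (edge s) u) _.
  apply: le_trans (race_round_succ_ge ce uV tP).
  rewrite ler_wpM2l ?invr_ge0 // ler_wpM2l ?(ltW (race_weight_gt0 uV tP)) //.
  apply: (bmono_eval_ge_near_vertex pos ce) => l.
  exact: le_trans (segment_dist l s0 cu cw) s_half.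
rewrite (bigD1 u) //= lerDl sumr_ge0 // => v /andP[vV _].
exact: race_round_succ_ge0.
Qed.

End Edge.

Lemma race_strong_factory_absurd : False.
Proof.
have [u [i [j [uV iu ju]]]] : exists u, exists i, exists j,
    [/\ u \in V, i \in u & j \notin u].
  apply: exists_vertex_edge.
  by rewrite (ltn_trans _ k_gt1) // (leq_trans k_lt (leq_pred n)).
have [d d0 hd] := edge_total_succ_ge uV iu ju.
have hh : (2 : R)^-1 + 2^-1 = 1 by rewrite [RHS](splitr 1) div1r.
have h2 : (0 : R) < 2^-1 by rewrite invr_gt0.
have d_half : d <= 2^-1.
  have s01 : 0 < (2^-1 : R) <= 1 by apply/andP; split; lra.
  apply: le_trans (hd _ _) (edge_total_succ_le uV iu ju s01).
  by rewrite lexx ltW.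
have s_half : 0 <= d / 2 <= 2^-1 by apply/andP; split; lra.
have s01 : 0 < d / 2 <= 1 by apply/andP; split; lra.
have := le_trans (hd _ s_half) (edge_total_succ_le uV iu ju s01).
lra.
Qed.

End BernoulliRace.

Theorem corollary7p2 (R : realType) (n k : nat) (hk1 : (1 < k)%N)
    (hk2 : (k < n - 1)%N) :
  ~ exists (P : {set 'I_n} -> bpoly R n) (C : R),
      valid_race k P C /\ race_strong_factory k P C.
Proof.
case=> P [C [valid factory]].
by apply: (race_strong_factory_absurd valid factory hk1); rewrite -subn1.
Qed.
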